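(* Let $p_n(\mathbf y)$ be a linear sequence of symmetric functions of binomial type, and let $\mathbf y=(y_1,y_2,\dots)$ and $\mathbf z=(z_1,z_2,\dots)$ be disjoint sets of variables. Then for every $n\ge0$, $$p_n(\mathbf y\cup\mathbf z)=\sum_{k=0}^n\binom nk\,p_{n-k}(\mathbf y)\,p_k(\mathbf z).$$
   Context: A linear sequence of symmetric functions of binomial type is $$p_n(\mathbf y)=\sum_{\lambda\vdash n}\frac{n!}{\prod_i\lambda_i!}\Big(\prod_ia_{\lambda_i}\Big)m_\lambda(\mathbf y)$$ for a sequence $(a_i)_{i\ge0}$ of complex numbers with $a_0=1$, $a_1\ne0$, where $m_\lambda$ is the monomial symmetric function. $p_n(\mathbf y\cup\mathbf z)$ denotes the symmetric function $p_n$ evaluated on the combined set of variables $\mathbf y\cup\mathbf z$. *)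

From HB Require Import structures.
From mathcomp Require Import all_boot all_algebra.
From mathcomp Require Import complex.
From mathcomp Require Import mpoly.
Set Implicit Arguments. Unset Strict Implicit. Unset Printing Implicit Defensive.
Import GRing.Theory.
Local Open Scope ring_scope.

(* Partitions of n with all parts <= mx, as nonincreasing lists of positive
   integers; [fuel] is structural fuel (fuel = n suffices). *)
Fixpoint parts_rec (fuel n mx : nat) : seq (seq nat) :=
  if n is 0 then [:: [::]] else
  if fuel is f.+1 then
    flatten [seq [seq i :: l | l <- parts_rec f (n - i) i] | i <- iota 1 (minn n mx)]
  else [::].

Definition partitions (n : nat) : seq (seq nat) := parts_rec n n n.

(* Monomial symmetric function m_lambda evaluated at the finite variable
   family x_0,...,x_{N-1} (elements of a commutative ring T): the sum of all
   distinct monomials prod_i x_i^(al_i) whose nonzero exponents are a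
   rearrangement of lambda. *)
Definition msym (T : comNzRingType) (N : nat) (x : 'I_N -> T) (la : seq nat) : T :=
  \sum_(al : {ffun 'I_N -> 'I_(sumn la).+1} |
          perm_eq [seq (al i : nat) | i <- enum 'I_N & (al i : nat) != 0%N] la)
     \prod_(i < N) x i ^+ al i.

Definition pbin (C : fieldType) (T : comAlgType C) (a : nat -> C) (n : nat)
    (N : nat) (x : 'I_N -> T) : T :=
  \sum_(la <- partitions n)
     ((n`!)%:R / (\prod_(j <- la) (j`!)%:R) * \prod_(j <- la) a j) *: msym x la.

(* Put E_D(u) = sum_(k <= D) a_k u^k / k!.  For n <= D the coefficient of t^n
   in prod_i E_D(x_i t) is p_n(x) / n!: an exponent vector al of total degree n
   contributes prod_i a_(al_i) / al_i! times x^al, and grouping the vectors by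
   the partition formed by their nonzero entries recovers the coefficient
   n! / prod lambda_i! * prod a_(lambda_i) of m_lambda (this uses a_0 = 1).
   Over y u z the product splits into the product over y times the product
   over z, and comparing coefficients of t^n gives the binomial identity. *)

From Pilot Require Import Defs.
From HB Require Import structures.
From mathcomp Require Import all_boot all_algebra.
From mathcomp Require Import complex.
From mathcomp Require Import mpoly.
From mathcomp Require Import zify.
Set Implicit Arguments. Unset Strict Implicit. Unset Printing Implicit Defensive.
Import GRing.Theory.
Local Open Scope ring_scope.

Lemma mem_parts_rec fuel n mx la : (n <= fuel)%N ->
  (la \in parts_rec fuel n mx) = [&& sumn la == n, path geq mx la & 0%N \notin la].
Proof.
elim: fuel n mx la => [|f IH] [|n] mx la //= le_n_f;
  try by rewrite mem_seq1; case: la => [|[|i] l]; rewrite //= ?in_cons ?andbF.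
apply/allpairsPdep/and3P => [[i [l [+ + ->]]] | [/eqP sum_la mx_la]].
  rewrite mem_iota add1n ltnS leq_min => /andP[i_gt0 /andP[i_le_n i_le_mx]].
  rewrite IH; last by lia.
  case/and3P => /eqP sum_l i_l l_nz.
  by rewrite /= sum_l subnKC // i_le_mx i_l inE negb_or l_nz eq_sym -lt0n i_gt0.
case: la sum_la mx_la => [|i l] //= sum_la /andP[i_le_mx i_l].
rewrite inE negb_or eq_sym -lt0n => /andP[i_gt0 l_nz].
exists i, l; split => //.
  by rewrite mem_iota add1n ltnS leq_min i_gt0 i_le_mx -sum_la leq_addr.
by rewrite IH -sum_la ?addKn ?eqxx ?i_l //; lia.
Qed.

Lemma mem_partitions n la :
  (la \in partitions n) = [&& sumn la == n, sorted geq la & 0%N \notin la].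
Proof.
rewrite mem_parts_rec //; case: la => [|i l] //=.
by case: eqP => //= <-; rewrite leq_addr.
Qed.

Lemma uniq_parts_rec fuel n mx : uniq (parts_rec fuel n mx).
Proof.
elim: fuel n mx => [|f IH] [|n] mx //=.
apply: allpairs_uniq_dep => [|i _|]; rewrite ?iota_uniq ?IH //.
by move=> [i l] [j l'] _ _ /= [-> ->].
Qed.

Lemma sum_partitions_perm_eq (V : nmodType) (F : seq nat -> V) s n :
  0%N \notin s ->
  \sum_(la <- partitions n | perm_eq s la) F la
    = if sumn s == n then F (sort geq s) else 0.
Proof.
move=> s_nz; case: eqP => [<- | sum_s]; last first.
  rewrite big1_seq // => la /andP[/perm_sumn sum_eq].
  by rewrite mem_partitions -sum_eq => /andP[/eqP].
have geq_total : total geq by move=> x y; apply: leq_total.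
have geq_trans : transitive geq by move=> y x z /= xy yz; apply: leq_trans yz xy.
have geq_anti : antisymmetric geq by move=> x y; rewrite andbC => /anti_leq.
have sort_s : sort geq s \in partitions (sumn s).
  rewrite mem_partitions (perm_sumn (permEl (perm_sort geq s))) eqxx.
  by rewrite sort_sorted // mem_sort.
rewrite -big_filter (@eq_in_filter _ _ (pred1 (sort geq s))).
  by rewrite filter_pred1_uniq ?uniq_parts_rec // big_seq1.
move=> la /[!mem_partitions] /and3P[_ la_sorted _] /=.
rewrite (sameP (perm_sortP geq_total geq_trans geq_anti s la) eqP).
by rewrite (sorted_sort geq_trans la_sorted) eq_sym.
Qed.

Section ExponentVectors.
Variable I : finType.
Implicit Types f g : I -> nat.

Definition nz_exponents f : seq nat := [seq f i | i <- enum I & f i != 0%N].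

Lemma eq_nz_exponents f g : f =1 g -> nz_exponents f = nz_exponents g.
Proof.
move=> fg; rewrite /nz_exponents (eq_map fg).
by rewrite (eq_filter (a2 := fun i => g i != 0%N)) // => i; rewrite fg.
Qed.

Lemma nz_exponents_nz f : 0%N \notin nz_exponents f.
Proof.
rewrite /nz_exponents; apply/negP; case/mapP => i.
by rewrite mem_filter => /andP [/eqP f_nz _] /esym.
Qed.

Lemma big_nz_exponents (R : Type) (idx : R) (op : Monoid.com_law idx) f (F : nat -> R) :
  F 0%N = idx -> \big[op/idx]_(k <- nz_exponents f) F k = \big[op/idx]_i F (f i).
Proof.
move=> F0; rewrite big_map big_filter big_enum_cond /= big_mkcond /=.
by apply: eq_bigr => i _; case: eqP => [->|].
Qed.

Lemma sumn_nz_exponents f : sumn (nz_exponents f) = (\sum_i f i)%N.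
Proof. by rewrite sumnE big_nz_exponents. Qed.

Lemma big_ffun_ord_widen (V : nmodType) j D
    (P : (I -> nat) -> bool) (F : (I -> nat) -> V) :
  (forall f g, f =1 g -> P f = P g) -> (forall f g, f =1 g -> F f = F g) ->
  (j <= D)%N -> (forall f, P f -> forall i, f i <= j)%N ->
  \sum_(al : {ffun I -> 'I_D.+1} | P (fun i => al i)) F (fun i => al i)
    = \sum_(al : {ffun I -> 'I_j.+1} | P (fun i => al i)) F (fun i => al i).
Proof.
move=> P_ext F_ext le_jD P_le_j; have le_jD1 : (j.+1 <= D.+1)%N by [].
pose widen (al : {ffun I -> 'I_j.+1}) := [ffun i => widen_ord le_jD1 (al i)].
have widenE al i : (widen al i : nat) = al i by rewrite ffunE.
rewrite (reindex_onto widen (fun be => [ffun i => inord (be i)])) => [|be P_be].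
  apply: eq_big => [al|al _]; last exact: F_ext (widenE al).
  suff -> : [ffun i => inord (widen al i)] = al.
    by rewrite eqxx andbT; apply: P_ext (widenE al).
  by apply/ffunP => i; apply: val_inj; rewrite ffunE /= widenE inordK.
apply/ffunP => i; apply: val_inj; rewrite !ffunE /= inordK //.
by rewrite ltnS; apply: P_le_j P_be i.
Qed.

End ExponentVectors.

Section TruncatedEGF.
Variables (C : fieldType) (T : comAlgType C) (a : nat -> C).

Definition part_coef n (la : seq nat) : C :=
  (n`!)%:R / \prod_(k <- la) (k`!)%:R * \prod_(k <- la) a k.

Lemma pbinE n N (x : 'I_N -> T) :
  pbin a n x = \sum_(la <- partitions n) part_coef n la *: Defs.msym x la.
Proof. by []. Qed.

Lemma perm_part_coef n la mu : perm_eq la mu -> part_coef n la = part_coef n mu.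
Proof. by move=> pe; rewrite /part_coef !(perm_big _ pe). Qed.

Definition monomial (I : finType) (x : I -> T) (e : I -> nat) : T :=
  \prod_i x i ^+ e i.

Definition exp_weight (I : finType) (e : I -> nat) : C :=
  \prod_i (a (e i) / (e i)`!%:R).

Lemma part_coef_nz_exponents (I : finType) (e : I -> nat) n :
  a 0%N = 1 -> part_coef n (nz_exponents e) = (n`!)%:R * exp_weight e.
Proof.
move=> a0; rewrite /part_coef !big_nz_exponents //.
by rewrite /exp_weight prodf_div mulrA [_ * _ / _]mulrAC.
Qed.

Lemma msymE N D (x : 'I_N -> T) la : (sumn la <= D)%N ->
  Defs.msym x la = \sum_(al : {ffun 'I_N -> 'I_D.+1} |
                          perm_eq (nz_exponents (fun i => al i)) la)
                     monomial x (fun i => al i).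
Proof.
move=> le_la_D.
rewrite (big_ffun_ord_widen (j := sumn la) (F := monomial x)
          (P := fun e => perm_eq (nz_exponents e) la)) //.
- by move=> f g fg; rewrite (eq_nz_exponents fg).
- by move=> f g fg; apply: eq_bigr => i _; rewrite fg.
move=> f /perm_sumn <- i.
by rewrite sumn_nz_exponents (bigD1 i) //= leq_addr.
Qed.

Definition egf_prod (I : finType) D (x : I -> T) : {poly T} :=
  \prod_i \poly_(k < D.+1) ((a k / (k`!)%:R) *: x i ^+ k).

Lemma coef_egf_prod (I : finType) D (x : I -> T) j :
  (egf_prod D x)`_j = \sum_(al : {ffun I -> 'I_D.+1} | (\sum_i (al i : nat) == j)%N)
                         exp_weight (fun i => al i) *: monomial x (fun i => al i).
Proof.
rewrite /egf_prod; under eq_bigr do rewrite poly_def.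
rewrite bigA_distr_bigA /= coef_sum [RHS]big_mkcond /=; apply: eq_bigr => al _.
under eq_bigr do rewrite -mul_polyC.
rewrite big_split /= -rmorph_prod prodrXr coefCM coefXn scaler_prod eq_sym.
by case: eqP; rewrite ?mulr1 ?mulr0.
Qed.

Lemma pbin_coef_egf_prod N D (x : 'I_N -> T) n : a 0%N = 1 -> (n <= D)%N ->
  pbin a n x = (n`!)%:R *: (egf_prod D x)`_n.
Proof.
move=> a0 le_nD; rewrite pbinE coef_egf_prod scaler_sumr.
transitivity (\sum_(la <- partitions n) \sum_(al : {ffun 'I_N -> 'I_D.+1}
    | perm_eq (nz_exponents (fun i => al i)) la)
      part_coef n la *: monomial x (fun i => al i)).
  apply: eq_big_seq => la; rewrite mem_partitions => /and3P[/eqP sum_la _ _].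
  by rewrite (msymE _ (D := D)) ?sum_la // scaler_sumr.
rewrite (exchange_big_dep predT) //= [RHS]big_mkcond /=; apply: eq_bigr => al _.
rewrite -scaler_suml sum_partitions_perm_eq ?nz_exponents_nz // sumn_nz_exponents.
case: eqP => _; last by rewrite scale0r.
by rewrite (perm_part_coef _ (permEl (perm_sort geq _))) part_coef_nz_exponents // scalerA.
Qed.

Lemma egf_prod_split m l D (x : 'I_(m + l) -> T) :
  egf_prod D x
    = egf_prod D (fun i => x (lshift l i)) * egf_prod D (fun j => x (rshift m j)).
Proof. exact: big_split_ord. Qed.

End TruncatedEGF.

Lemma scale_fact_bin (C : fieldType) (T : comAlgType C) n k (u v : T) : (k <= n)%N ->
  (n`!)%:R *: (u * v)
    = 'C(n, k)%:R * ((((n - k)`!)%:R : C) *: u) * (((k`!)%:R : C) *: v).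
Proof.
move=> le_kn; rewrite mulr_natl -scaler_nat -scalerAl -scalerAr -scalerAl !scalerA.
by rewrite -(bin_fact le_kn) !natrM mulrA.
Qed.

Lemma pbin_union (C : fieldType) (T : comAlgType C) (a : nat -> C) m l n
    (x : 'I_(m + l) -> T) : a 0%N = 1 ->
  pbin a n x = \sum_(k < n.+1) 'C(n, k)%:R * pbin a (n - k) (fun i => x (lshift l i))
                                        * pbin a k (fun j => x (rshift m j)).
Proof.
move=> a0; rewrite (pbin_coef_egf_prod _ a0 (leqnn n)) egf_prod_split coefMr scaler_sumr.
apply: eq_bigr => k _; have le_kn : (k <= n)%N by rewrite -ltnS.
rewrite !(pbin_coef_egf_prod _ a0 (D := n)) ?leq_subr //.
exact: scale_fact_bin le_kn.
Qed.

Theorem mainTheorem6 (R : rcfType) (a : nat -> complex R)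
    (ha0 : a 0%N = 1) (ha1 : a 1%N != 0) (m l n : nat) :
  pbin a n (fun i : 'I_(m + l) => ('X_i : {mpoly (complex R)[m + l]}))
  = \sum_(k < n.+1)
      'C(n, k)%:R
      * pbin a (n - k) (fun i : 'I_m => ('X_(lshift l i) : {mpoly (complex R)[m + l]}))
      * pbin a k (fun j : 'I_l => ('X_(rshift m j) : {mpoly (complex R)[m + l]})).
Proof.
exact: pbin_union.
Qed.
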